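(* Let $G$ and $H$ be finite abelian groups, written additively, of the same even order $k$, and let $f:G\to H$ be semi-planar. For $a\in G$, $b\in H$ put $S(a,b)=\{t\in G : f(t-a)=f(t)+b\}$. Then for each pair $a\in G$, $b\in H$ with $a\neq 0$, we have $|S(a,b)|=2$ if and only if $$\mathcal{L}(\alpha a, d+b)\cap \mathcal{L}((\alpha+1)a, d)\neq\varnothing \quad\text{for all } d\in H \text{ and all } \alpha\in\mathbb{Z}.$$
   Context: A function $f:G\to H$ between finite abelian groups of the same even order is semi-planar if for every non-identity $a\in G$ and every $y\in H$, the equation $f(x+a)-f(x)=y$ has either $0$ or $2$ solutions $x\in G$. The incidence structure $S(G,H;f)$ has points $(x,y)$ with $x\in G$, $y\in H$, and lines $\mathcal{L}(a,b)$ with $a\in G$, $b\in H$; the point $(x,y)$ is incident with $\mathcal{L}(a,b)$ if and only if $y=f(x-a)+b$. For two lines, $\mathcal{L}(a,b)\cap\mathcal{L}(c,d)$ denotes the set of points incident with both. *)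

From HB Require Import structures.
From mathcomp Require Import all_boot all_order all_algebra.
Set Implicit Arguments. Unset Strict Implicit. Unset Printing Implicit Defensive.
Import GRing.Theory.
Local Open Scope ring_scope.

Definition semi_planar (G H : finZmodType) (f : G -> H) : Prop :=
  forall (a : G) (y : H), a != 0 ->
    #|[set x : G | f (x + a) - f x == y]| \in [:: 0%N; 2%N].

(* point (x,y) incident with line L(a,b) in S(G,H;f) iff y = f(x-a)+b *)
Definition incident (G H : finZmodType) (f : G -> H) (p : G * H) (l : G * H) : bool :=
  p.2 == f (p.1 - l.1) + l.2.

Definition line_meet (G H : finZmodType) (f : G -> H) (a : G) (b : H) (c : G) (d : H)
  : {set G * H} :=
  [set p : G * H | incident f p (a, b) && incident f p (c, d)].

Definition Sset (G H : finZmodType) (f : G -> H) (a : G) (b : H) : {set G} :=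
  [set t : G | f (t - a) == f t + b].

(* Two lines L(c, b') and L(c', d) meet exactly when f(t - (c' - c)) = f t + (b' - d)
   has a solution t (put t = x - c), so every line pair in the statement meets iff
   S(a, b) is nonempty. Semi-planarity, applied to the shift -a, makes |S(a, b)| either
   0 or 2, so nonemptiness is the same as |S(a, b)| = 2. *)
From mathcomp Require Import all_boot all_order all_algebra.
Import GRing.Theory.
Local Open Scope ring_scope.

Section SemiPlanarLines.

Variables (G H : finZmodType) (f : G -> H).

Lemma line_meet_neq0 (c : G) (b' : H) (c' : G) (d : H) :
  (line_meet f c b' c' d != set0) = (Sset f (c' - c) (b' - d) != set0).
Proof.
apply/set0Pn/set0Pn => [[[x y]] | [t]].
- rewrite !inE /incident /= => /andP[/eqP -> /eqP meet].
  exists (x - c); rewrite inE opprB addrA subrK.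
  by rewrite addrA meet addrK.
- rewrite inE => /eqP St; exists (t + c, f t + b').
  rewrite inE /incident /= addrK eqxx /=.
  by rewrite -addrA -opprB St -addrA subrK.
Qed.

Hypothesis f_semi_planar : semi_planar f.

Lemma card_Sset_semi_planar (a : G) (b : H) :
  a != 0 -> #|Sset f a b| \in [:: 0%N; 2%N].
Proof.
move=> a_neq0.
have -> : Sset f a b = [set x | f (x + - a) - f x == b].
  by apply/setP => t; rewrite !inE subr_eq [b + _]addrC.
by apply: f_semi_planar; rewrite oppr_eq0.
Qed.

Lemma card_Sset_eq2 (a : G) (b : H) :
  a != 0 -> (#|Sset f a b| == 2%N) = (Sset f a b != set0).
Proof.
move=> a_neq0; have := @card_Sset_semi_planar a b a_neq0.
rewrite -card_gt0 !inE.
by case/orP => /eqP ->.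
Qed.

End SemiPlanarLines.

Theorem lemma3 (G H : finZmodType) (f : G -> H)
  (hord : #|G| = #|H|) (heven : ~~ odd #|G|) (hsp : semi_planar f)
  (a : G) (b : H) (ha : a != 0) :
  #|Sset f a b| = 2%N <->
  (forall (d : H) (alpha : int),
      line_meet f (a *~ alpha) (d + b) (a *~ (alpha + 1)) d != set0).
Proof.
have step alpha : a *~ (alpha + 1) - a *~ alpha = a.
  by rewrite mulrzDr mulr1z addrAC subrr add0r.
have cancel_d d : d + b - d = b by rewrite addrAC subrr add0r.
have card_S2 : (#|Sset f a b| == 2%N) = (Sset f a b != set0) by exact: card_Sset_eq2.
split=> [/eqP | meet].
  by rewrite card_S2 => S_neq0 d alpha; rewrite line_meet_neq0 step cancel_d.
by apply/eqP; rewrite card_S2; have := meet 0 0; rewrite line_meet_neq0 step cancel_d.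
Qed.
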